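(* For every ordered forest $\mathcal F$ let $S'^{\mathcal F}(A')$ be the sum of all $\mathcal F$-compatible words over $A'$ (in the sense below). Then for all ordered forests $\mathcal F,\mathcal G$, $S'^{\mathcal F}S'^{\mathcal G}=S'^{\mathcal F\mathcal G}$, and, letting letters of $A'$ commute with letters of $B'$, $$S'^{\mathcal F}(A'\oplus B')=\sum_{V}S'^{\mathrm{Roo}_V\mathcal F}(A')\,S'^{\mathrm{Lea}_V\mathcal F}(B'),$$ the sum over admissible cuts $V$ of $\mathcal F$. Hence $\mathcal F\mapsto S'^{\mathcal F}$ is compatible with the product and coproduct of $\mathbf H_o$.
   Context: An ordered forest on $n$ vertices ($n\ge 0$) is a rooted forest whose vertex set is $[n]=\{1,\dots,n\}$ with its natural total order (the labels need not be related to the tree structure); it is determined by its set of roots and the parent map $p$ on non-root vertices. A vertex $w$ is a descendant of $v$ if $v$ is obtained from $w$ by applying $p$ at least once. For $I\subseteq[n]$ with $|I|=k$, the restriction $\mathcal F_{|I}$ is the ordered forest on $[k]$ obtained by keeping the vertices in $I$ and the edges of $\mathcal F$ between two vertices of $I$ (a vertex of $I$ whose parent is not in $I$ becomes a root), relabelled via the unique increasing bijection $I\to[k]$. An admissible cut of $\mathcal F$ is a subset $V\subseteq[n]$ (possibly empty) containing no two distinct vertices one of which is a descendant of the other. For such $V$, let $L_V$ be the set of vertices lying in $V$ or descending from an element of $V$, and set $\mathrm{Lea}_V\mathcal F=\mathcal F_{|L_V}$, $\mathrm{Roo}_V\mathcal F=\mathcal F_{|[n]\setminus L_V}$. For ordered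 forests $\mathcal F$ on $[n]$ and $\mathcal G$ on $[m]$, $\mathcal F\mathcal G$ is the ordered forest on $[n+m]$ which is the disjoint union of $\mathcal F$ and of $\mathcal G$ with labels shifted by $n$. $\mathbf H_o$ is the vector space with basis the ordered forests, product extending $\mathcal F\mathcal G$, coproduct $\Delta(\mathcal F)=\sum_{V}\mathrm{Roo}_V\mathcal F\otimes\mathrm{Lea}_V\mathcal F$. Second realization: $A'=\{a_{ij}: 1\le i\le j\}$ with relation $a_{hi}\prec a_{ij}$ whenever $h\le i<j$ (and no other relations). A word $w=w_1\cdots w_n$ over $A'$ is $\mathcal F$-compatible if (a) for each root $k$ of $\mathcal F$, $w_k$ is a diagonal letter $a_{ii}$ for some $i$, and (b) $w_k\prec w_l$ whenever $k$ is the parent of $l$. With $B'=\{b_{ij}:1\le i\le j\}$ a disjoint copy of $A'$, $A'\oplus B'$ is the disjoint union with the relations of $A'$ and of $B'$, together with $a\prec b_{ii}$ for all $a\in A'$ and all $i\ge1$; $\mathcal F$-compatible words over $A'\oplus B'$ are defined by (a) (diagonal letters $a_{ii}$ or $b_{ii}$ at roots) and (b) with this extended relation. *)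

From mathcomp Require Import all_boot.
Set Implicit Arguments. Unset Strict Implicit. Unset Printing Implicit Defensive.

(* An ordered forest on n vertices; vertices are 0..n-1 (0-based version of
   [n] with its natural order); fpar v = None means v is a root. *)
Record oforest := OForest { fsize : nat; fpar : nat -> option nat }.

Definition fstep (F : oforest) (o : option nat) : option nat := obind (fpar F) o.

Definition desc (F : oforest) (w v : nat) : bool :=
  has (fun k => iter k (fstep F) (Some w) == Some v) (iota 1 (fsize F)).

Definition is_forest (F : oforest) : Prop :=
  (forall v u, v < fsize F -> fpar F v = Some u -> u < fsize F) /\
  (forall v, v < fsize F -> ~~ desc F v v).

(* restriction F_{|I}, relabelled by the increasing bijection I -> [k] *)
Definition restrict (F : oforest) (I : nat -> bool) : oforest :=
  let s := [seq v <- iota 0 (fsize F) | I v] in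
  OForest (size s)
    (fun r => match fpar F (nth 0 s r) with
              | Some u => if u \in s then Some (index u s) else None
              | None => None end).

(* the product F G (disjoint union, G shifted by n) *)
Definition fcat (F G : oforest) : oforest :=
  OForest (fsize F + fsize G)
    (fun v => if v < fsize F then fpar F v
              else omap (addn (fsize F)) (fpar G (v - fsize F))).

Definition admissible (F : oforest) (V : {set 'I_(fsize F)}) : bool :=
  [forall x in V, forall y in V, (x != y) ==> ~~ desc F (val x) (val y)].

Definition inL (F : oforest) (V : {set 'I_(fsize F)}) (w : nat) : bool :=
  [exists x in V, (w == val x) || desc F w (val x)].

Definition Roo (F : oforest) (V : {set 'I_(fsize F)}) : oforest :=
  restrict F (fun w => ~~ inL V w).
Definition Lea (F : oforest) (V : {set 'I_(fsize F)}) : oforest :=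
  restrict F (fun w => inL V w).

(* letters a_ij of A' encoded as (i,j), with 1 <= i <= j *)
Definition letter := (nat * nat)%type.
Definition validA (x : letter) : bool := 0 < x.1 <= x.2.
Definition diagA (x : letter) : bool := x.1 == x.2.
Definition precA (x y : letter) : bool := (x.2 == y.1) && (x.1 <= x.2 < y.2).

(* letters of A' (+) B': (false, l) is a_l, (true, l) is b_l *)
Definition letterAB := (bool * letter)%type.
Definition validAB (x : letterAB) : bool := validA x.2.
Definition diagAB (x : letterAB) : bool := diagA x.2.
Definition precAB (x y : letterAB) : bool :=
  if x.1 == y.1 then precA x.2 y.2 else (~~ x.1) && y.1 && diagA y.2.

Definition compat_gen (L : Type) (x0 : L) (valid diag : L -> bool)
  (prec : L -> L -> bool) (F : oforest) (w : seq L) : bool :=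
  [&& size w == fsize F, all valid w &
   all (fun k => match fpar F k with
                 | None => diag (nth x0 w k)
                 | Some l => prec (nth x0 w l) (nth x0 w k) end)
       (iota 0 (fsize F))].

Definition compatA F w := compat_gen (0, 0) validA diagA precA F w.
Definition compatAB F w := compat_gen (false, (0, 0)) validAB diagAB precAB F w.

(* formal series with nat coefficients: coefficient functions on words.
   S'^F(A') : coefficient 1 on F-compatible words, 0 elsewhere. *)
Definition SA (F : oforest) (w : seq letter) : nat := compatA F w.
Definition SAB (F : oforest) (w : seq letterAB) : nat := compatAB F w.

Definition prod_ser (S T : seq letter -> nat) (w : seq letter) : nat :=
  \sum_(k < (size w).+1) S (take k w) * T (drop k w).

(* commutation of A'-letters with B'-letters: the quotient monoid is
   A'^* x B'^*, a word w maps to (projA w, projB w). *)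
Definition projA (w : seq letterAB) : seq letter := [seq x.2 | x <- w & ~~ x.1].
Definition projB (w : seq letterAB) : seq letter := [seq x.2 | x <- w & x.1].

Fixpoint shuffle (m : seq bool) (u v : seq letter) : seq letterAB :=
  match m with
  | [::] => [::]
  | b :: m' => if b then match v with
                         | y :: v' => (true, y) :: shuffle m' u v'
                         | [::] => [::] end
               else match u with
                    | x :: u' => (false, x) :: shuffle m' u' v
                    | [::] => [::] end
  end.

Fixpoint allmasks (N : nat) : seq (seq bool) :=
  match N with
  | 0 => [:: [::]]
  | N'.+1 => [seq b :: m | b <- [:: false; true], m <- allmasks N']
  end.

(* coefficient of the class (u,v) in the image of S'^F(A'(+)B'):
   sum over all words w over A'(+)B' with projA w = u and projB w = v
   (these are exactly the shuffles of u and v, each obtained once). *)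
Definition imageAB (F : oforest) (u v : seq letter) : nat :=
  \sum_(m <- allmasks (size u + size v) |
        (projA (shuffle m u v) == u) && (projB (shuffle m u v) == v))
     SAB F (shuffle m u v).

From mathcomp Require Import all_boot.
Set Implicit Arguments. Unset Strict Implicit. Unset Printing Implicit Defensive.

(* Product: no edge of [F G] joins its two blocks, so a word is [F G]-compatible iff its
   prefix of length [|F|] is [F]-compatible and the rest is [G]-compatible; in the Cauchy
   product only the splitting point [|F|] contributes.
   Coproduct: a word over A' (+) B' colours each vertex A or B. No letter of A' lies above a
   letter of B' and a letter of A' lies below one of B' only if the latter is diagonal, so
   the word is compatible iff the B-vertices form a set T closed under taking children, the
   A-part is compatible with F restricted to the complement of T and the B-part with F
   restricted to T (where children of A-vertices are roots). The closed sets T are exactly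
   the sets L_V of the admissible cuts V (V being the set of topmost elements of T), and
   the words projecting to (u, v) are the shuffles of u and v, one per colour mask. *)

Section CompatGen.
Variables (L : Type) (x0 : L) (valid diag : L -> bool) (prec : L -> L -> bool).
Local Notation compat := (compat_gen x0 valid diag prec).

Definition compat_at F w k :=
  if fpar F k is Some l then prec (nth x0 w l) (nth x0 w k) else diag (nth x0 w k).

Lemma compat_genE F w : compat F w =
  [&& size w == fsize F, all valid w & all (compat_at F w) (iota 0 (fsize F))].
Proof. by []. Qed.

Lemma compat_at_fcatl F G w1 w2 k : is_forest F -> size w1 = fsize F -> k < fsize F ->
  compat_at (fcat F G) (w1 ++ w2) k = compat_at F w1 k.
Proof.
move=> hF sw1 hk; rewrite /compat_at /= hk.
by case e: (fpar F k) => [l|]; rewrite !nth_cat sw1 hk // (hF.1 _ _ hk e).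
Qed.

Lemma compat_at_fcatr F G w1 w2 k : size w1 = fsize F ->
  compat_at (fcat F G) (w1 ++ w2) (fsize F + k) = compat_at G w2 k.
Proof.
move=> sw1; rewrite /compat_at /= ltnNge leq_addr addKn.
by case: (fpar G k) => [l|]; rewrite /= !nth_cat sw1 !ltnNge !leq_addr !addKn.
Qed.

Lemma compat_fcat F G w1 w2 : is_forest F -> size w1 = fsize F ->
  compat (fcat F G) (w1 ++ w2) = compat F w1 && compat G w2.
Proof.
move=> hF sw1; rewrite !compat_genE /= size_cat sw1 eqn_add2l all_cat.
rewrite iotaD add0n -[in iota (fsize F) _](addn0 (fsize F)) iotaDl all_cat all_map.
have -> : all (compat_at (fcat F G) (w1 ++ w2)) (iota 0 (fsize F)) =
          all (compat_at F w1) (iota 0 (fsize F)).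
  by apply: eq_in_all => k; rewrite mem_iota => /andP [_ hk]; exact: compat_at_fcatl.
have -> : all (preim (addn (fsize F)) (compat_at (fcat F G) (w1 ++ w2))) (iota 0 (fsize G)) =
          all (compat_at G w2) (iota 0 (fsize G)).
  by apply: eq_in_all => k _; exact: compat_at_fcatr.
by rewrite eqxx; case: (size w2 == _) (all valid w1) (all valid w2) => [] [] [];
  rewrite ?andbF.
Qed.

End CompatGen.

Lemma compatA_size F (w : seq letter) : compatA F w -> size w = fsize F.
Proof. by case/and3P => /eqP. Qed.

Lemma SA_eq0 F w : size w != fsize F -> SA F w = 0.
Proof. by rewrite /SA /compatA /compat_gen => /negbTE->. Qed.

Lemma prod_ser_SA F G w : is_forest F ->
  prod_ser (SA F) (SA G) w = SA (fcat F G) w.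
Proof.
move=> hF; rewrite /prod_ser (bigID (fun k : 'I__ => k == fsize F :> nat)) /=.
rewrite [X in _ + X]big1 ?addn0 => [|k nk]; last first.
  by rewrite SA_eq0 // size_takel // -ltnS.
rewrite (big_ord1_eq _ (fun k => SA F (take k w) * SA G (drop k w))) ltnS.
case: leqP => [le|lt].
  rewrite -[in RHS](cat_take_drop (fsize F) w).
  by rewrite /SA /compatA compat_fcat ?size_takel // mulnb.
by rewrite SA_eq0 //= neq_ltn (leq_trans lt) ?leq_addr.
Qed.

Lemma projA_map (T : nat -> bool) (f : nat -> letter) s :
  projA [seq (T i, f i) | i <- s] = [seq f i | i <- s & ~~ T i].
Proof. by rewrite /projA filter_map -map_comp. Qed.

Lemma projB_map (T : nat -> bool) (f : nat -> letter) s :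
  projB [seq (T i, f i) | i <- s] = [seq f i | i <- s & T i].
Proof. by rewrite /projB filter_map -map_comp. Qed.

Lemma size_projAB w : size w = size (projA w) + size (projB w).
Proof. by rewrite !size_map !size_filter addnC count_predC. Qed.

Lemma map_fst_shuffle m u v : map fst (shuffle m u v) = take (size (shuffle m u v)) m.
Proof. by elim: m u v => [|[] m IH] [|x u] [|y v] //=; rewrite IH. Qed.

Lemma projAB_shuffle m u v :
  count (fun b => ~~ b) m = size u -> count id m = size v ->
  projA (shuffle m u v) = u /\ projB (shuffle m u v) = v.
Proof.
rewrite /projA /projB; elim: m u v => [|[] m IH] u v /=; first by case: u; case: v.
  by case: v => [|y v] //= hu [] /(IH _ _ hu) [-> ->].
by case: u => [|x u] //= [] /IH hu /hu [-> ->].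
Qed.

Lemma mem_map_cons (T : eqType) (b c : T) m s :
  (b :: m \in map (cons c) s) = (b == c) && (m \in s).
Proof.
apply/mapP/andP => [[m' ms [-> ->]]|[/eqP -> ms]]; first by rewrite eqxx.
by exists m.
Qed.

Lemma mem_allmasks N m : (m \in allmasks N) = (size m == N).
Proof.
elim: N m => [|N IH] [|b m] //=; rewrite mem_cat cats0.
  by apply/negP => /orP [] /mapP [].
by rewrite !mem_map_cons !IH eqSS; case: b; rewrite ?andbF ?orbF.
Qed.

Lemma uniq_allmasks N : uniq (allmasks N).
Proof.
elim: N => [|N IH] //=; rewrite cats0 cat_uniq !map_inj_uniq ?IH //=; try by move=> ? ? [].
by rewrite andbT; apply/hasPn => _ /mapP [m _ ->]; apply/negP => /mapP [].
Qed.

Lemma sum_delta_seq (T : eqType) (r : seq T) (P : pred T) a X :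
  uniq r -> a \in r -> P a -> \sum_(m <- r | P m) (m == a) * X = X.
Proof.
move=> ur ar Pa; rewrite big_mkcond (bigD1_seq a) //= Pa eqxx mul1n big1 ?addn0 //.
by move=> i /negbTE ->; case: (P i).
Qed.

Lemma iter_fstep_None F j : iter j (fstep F) None = None.
Proof. by elim: j => //= j ->. Qed.

Lemma iter_fstep_None_le F x i j :
  iter i (fstep F) x = None -> i <= j -> iter j (fstep F) x = None.
Proof. by move=> h /subnK <-; rewrite iterD h iter_fstep_None. Qed.

Lemma restrict_eq F (I J : nat -> bool) :
  (forall i, i < fsize F -> I i = J i) -> restrict F I = restrict F J.
Proof.
move=> IJ; rewrite /restrict (@eq_in_filter _ I J) // => i.
by rewrite mem_iota => /andP [_ /IJ].
Qed.

Section Forest.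
Variable F : oforest.
Hypothesis hF : is_forest F.
Local Notation n := (fsize F).

Lemma fpar_lt v u : v < n -> fpar F v = Some u -> u < n.
Proof. exact: hF.1. Qed.

Lemma iter_fstep_lt j w v : w < n -> iter j (fstep F) (Some w) = Some v -> v < n.
Proof.
move=> hw; elim: j v => [|j IH] v /=; first by case=> <-.
case e: (iter j (fstep F) (Some w)) => [y|] //=; exact: fpar_lt (IH _ e).
Qed.

(* Pigeonhole: n + 1 successive ancestors inside [0, n) would repeat, giving a cycle. *)
Lemma iter_fstep_size_None w : w < n -> iter n.+1 (fstep F) (Some w) = None.
Proof.
move=> hw; case e: (iter n.+1 (fstep F) (Some w)) => [z|] //; exfalso.
pose g i := odflt 0 (iter i (fstep F) (Some w)).
have hg i : i <= n.+1 -> iter i (fstep F) (Some w) = Some (g i).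
  move=> hi; rewrite /g; case ei: (iter i _ _) => [y|] //.
  by rewrite (iter_fstep_None_le ei hi) in e.
have g_lt i : i <= n -> g i < n by move=> hi; exact: iter_fstep_lt hw (hg i (leqW hi)).
have sub : {subset [seq g i | i <- iota 0 n.+1] <= iota 0 n}.
  by move=> x /mapP [i]; rewrite !mem_iota /= !add0n ltnS => /g_lt gi ->.
have : ~~ uniq [seq g i | i <- iota 0 n.+1].
  by apply/negP => /uniq_leq_size /(_ sub); rewrite size_map !size_iota ltnn.
case/(uniqPn 0) => i [j [ij]]; rewrite size_map size_iota ltnS => jn.
have iltn : i < n := leq_trans ij jn.
rewrite !(nth_map 0) ?size_iota ?ltnS ?(ltnW iltn) // !nth_iota ?ltnS ?(ltnW iltn) //.
rewrite !add0n => gij; have := hF.2 _ (g_lt i (ltnW iltn)); rewrite /desc => /hasP; apply.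
exists (j - i); first by rewrite mem_iota subn_gt0 ij add1n ltnS (leq_trans (leq_subr _ _)).
rewrite -{1}(hg i (leqW (ltnW iltn))) -(iterD (j - i) i) subnK ?(ltnW ij) //.
by rewrite (hg j (leqW jn)) gij.
Qed.

Lemma descP w v : w < n ->
  reflect (exists2 j, 0 < j & iter j (fstep F) (Some w) = Some v) (desc F w v).
Proof.
move=> hw; apply: (iffP hasP) => [[j]|[j j0 ej]].
  by rewrite mem_iota => /andP [j0 _] /eqP; exists j.
exists j; last by rewrite ej.
rewrite mem_iota j0 add1n ltnS leqNgt; apply/negP => nj.
by rewrite (iter_fstep_None_le (iter_fstep_size_None hw) nj) in ej.
Qed.

Lemma desc_fpar i x : i < n ->
  desc F i x = if fpar F i is Some l then (l == x) || desc F l x else false.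
Proof.
move=> hi; case e: (fpar F i) => [l|]; last first.
  by apply/(descP _ hi) => -[[|j] //]; rewrite iterSr /= e iter_fstep_None.
have hl := fpar_lt hi e.
apply/(descP _ hi)/orP => [[[|j] //]|[/eqP <-|/(descP _ hl) [j j0 ej]]].
- rewrite iterSr /= e; case: j => [_ [->]|j _ ej]; first by left.
  by right; apply/(descP _ hl); exists j.+1.
- by exists 1; rewrite //= e.
- by exists j.+1; rewrite // iterSr /= e.
Qed.

Definition desc_closed (T : nat -> bool) :=
  forall k l, k < n -> fpar F k = Some l -> T l -> T k.

Definition desc_closedb (T : nat -> bool) :=
  all (fun k => if fpar F k is Some l then T l ==> T k else true) (iota 0 n).

Lemma desc_closedP T : reflect (desc_closed T) (desc_closedb T).
Proof.
apply: (iffP allP) => [h k l hk e Tl|h k].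
  by have := h k; rewrite mem_iota hk e Tl => /(_ isT).
by rewrite mem_iota => /andP [_ hk]; case e: (fpar F k) => [l|] //; apply/implyP/h.
Qed.

Lemma desc_closed_desc T w y : desc_closed T -> w < n -> desc F w y -> T y -> T w.
Proof.
move=> hT hw /(descP _ hw) [j _]; elim: j w hw => [|j IH] w hw; first by case=> ->.
rewrite iterSr /=; case e: (fpar F w) => [l|]; last by rewrite iter_fstep_None.
by move=> /(IH _ (fpar_lt hw e)) Tl /Tl; exact: hT.
Qed.

Lemma desc_closed_inL (V : {set 'I_n}) : desc_closed (inL V).
Proof.
move=> k l hk e /existsP [x /andP [xV h]]; apply/existsP; exists x.
by rewrite xV (desc_fpar _ hk) e h orbT.
Qed.

(* For descendant-closed [T], the admissible cut [V] with [L_V = T]. *)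
Definition cut_of (T : nat -> bool) : {set 'I_n} :=
  [set x : 'I_n | T x & if fpar F x is Some l then ~~ T l else true].

Lemma admissible_cut_of T : desc_closed T -> admissible (cut_of T).
Proof.
move=> hT; apply/forallP => x; apply/implyP; rewrite inE => /andP [_ px].
apply/forallP => y; apply/implyP; rewrite inE => /andP [Ty _]; apply/implyP => _.
rewrite (desc_fpar _ (ltn_ord x)); move: px; case e: (fpar F x) => [l|] // Tl.
apply: contra Tl => /orP [/eqP -> //|d].
exact: desc_closed_desc hT (fpar_lt (ltn_ord x) e) d Ty.
Qed.

Lemma inL_cut_of T i : desc_closed T -> i < n -> inL (cut_of T) i = T i.
Proof.
move=> hT hi; apply/idP/idP.
  case/existsP => x /andP []; rewrite inE => /andP [Tx _] /orP [/eqP -> //|].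
  by move=> d; exact: desc_closed_desc d Tx.
(* Climb towards the root: the topmost ancestor of [i] still in [T] lies in the cut. *)
move: (iter_fstep_size_None hi); elim: n.+1 i hi => [//|k IH] i hi.
rewrite iterSr /=.
have top : (if fpar F i is Some l then ~~ T l else true) -> T i -> inL (cut_of T) i.
  by move=> ri Ti; apply/existsP; exists (Ordinal hi); rewrite /= eqxx andbT inE /= Ti.
case e: (fpar F i) => [l|]; last by move=> _; apply: top; rewrite e.
case Tl: (T l); last by move=> _; apply: top; rewrite e Tl.
move=> /(IH _ (fpar_lt hi e)) /(_ Tl) /existsP [x /andP [xV h]] _.
by apply/existsP; exists x; rewrite xV (desc_fpar _ hi) e h orbT.
Qed.

Lemma cut_of_inL (V : {set 'I_n}) : admissible V -> cut_of (inL V) = V.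
Proof.
move=> adm; apply/setP => x; rewrite inE; apply/andP/idP => [[]|xV].
  case/existsP => y /andP [yV /orP [/eqP /val_inj -> //|d]].
  rewrite (desc_fpar _ (ltn_ord x)) in d; move: d; case e: (fpar F x) => [l|] // d.
  by case/negP; apply/existsP; exists y; rewrite yV.
split; first by apply/existsP; exists x; rewrite xV eqxx.
case e: (fpar F x) => [l|] //; apply/negP => /existsP [y /andP [yV h]].
have d : desc F x y by rewrite (desc_fpar _ (ltn_ord x)) e h.
have [exy|nxy] := eqVneq x y; first by move: (hF.2 _ (ltn_ord x)); rewrite {2}exy d.
move/forallP/(_ x)/implyP/(_ xV)/forallP/(_ y)/implyP/(_ yV)/implyP/(_ nxy): adm.
by rewrite d.
Qed.

Lemma inL_inj (V V' : {set 'I_n}) : admissible V -> admissible V' ->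
  (forall i, i < n -> inL V i = inL V' i) -> V = V'.
Proof.
move=> a a' h; rewrite -(cut_of_inL a) -(cut_of_inL a'); apply/setP => x; rewrite !inE h //.
by case e: (fpar F x) => [l|] //; rewrite h // (fpar_lt (ltn_ord x) e).
Qed.

Lemma compatA_restrict (I : nat -> bool) (f : nat -> letter) :
  compatA (restrict F I) [seq f i | i <- iota 0 n & I i] =
  all (fun k => validA (f k)) [seq i <- iota 0 n | I i] &&
  all (fun k => if fpar F k is Some l then (if I l then precA (f l) (f k) else diagA (f k))
                else diagA (f k)) [seq i <- iota 0 n | I i].
Proof.
rewrite /compatA compat_genE /= size_map eqxx all_map /=; congr (_ && _).
set s := [seq i <- iota 0 n | I i].
rewrite -[in RHS](mkseq_nth 0 s) /mkseq all_map; apply: eq_in_all => r.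
rewrite mem_iota => /andP [_ hr].
have := mem_nth 0 hr; rewrite mem_filter mem_iota /= => /andP [_ kn].
rewrite /compat_at /= (nth_map 0) //.
case e: (fpar F (nth 0 s r)) => [l|] //.
have ls : (l \in s) = I l by rewrite mem_filter mem_iota /= (fpar_lt kn e) andbT.
rewrite ls; case Il: (I l) => //=.
by rewrite (nth_map 0) ?index_mem ?ls // nth_index ?ls.
Qed.

Lemma compatAB_split (T : nat -> bool) (f : nat -> letter) :
  compatAB F [seq (T i, f i) | i <- iota 0 n] =
  [&& desc_closedb T,
      compatA (restrict F (fun i => ~~ T i)) [seq f i | i <- iota 0 n & ~~ T i]
    & compatA (restrict F T) [seq f i | i <- iota 0 n & T i]].
Proof.
rewrite !compatA_restrict !all_filter /desc_closedb.
rewrite /compatAB compat_genE size_map size_iota eqxx /= all_map -!all_predI.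
apply: eq_in_all => k; rewrite mem_iota /= => hk.
rewrite /compat_at (nth_map 0) ?size_iota // nth_iota //= /validAB /diagAB /precAB /=.
case e: (fpar F k) => [l|]; last by case: (T k); rewrite /= ?andbT.
rewrite (nth_map 0) ?size_iota ?(fpar_lt hk e) // nth_iota ?(fpar_lt hk e) //=.
by case: (T k); case: (T l); case: (validA (f k)); rewrite //= ?andbT ?andbF.
Qed.

Definition cut_mask (V : {set 'I_n}) : seq bool := [seq inL V i | i <- iota 0 n].

Lemma SAB_shuffle u v m : size m = size u + size v ->
  projA (shuffle m u v) = u -> projB (shuffle m u v) = v ->
  SAB F (shuffle m u v) =
  \sum_(V | admissible V) (m == cut_mask V) * (SA (Roo V) u * SA (Lea V) v).
Proof.
move=> sm; set w := shuffle m u v => pa pb.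
have sw : size w = size m by rewrite size_projAB pa pb.
have fw : map fst w = m by rewrite map_fst_shuffle sw take_size.
have [mn|nmn] := eqVneq (size m) n; last first.
  rewrite /SAB /compatAB /compat_gen sw (negbTE nmn) big1 // => V _.
  by case: eqP => // em; case/negP: nmn; rewrite em size_map size_iota.
pose T := nth false m; pose f i := (nth (false, (0, 0)) w i).2.
have ew : w = [seq (T i, f i) | i <- iota 0 n].
  rewrite -{1}(mkseq_nth (false, (0, 0)) w) /mkseq sw mn; apply/eq_in_map => i.
  rewrite mem_iota => /andP [_ hi]; rewrite /T /f -fw (nth_map (false, (0, 0))) ?sw ?mn //.
  by case: (nth _ w i).
have TV V : m = cut_mask V -> forall i, i < n -> T i = inL V i.
  by move=> mV i hi; rewrite /T mV (nth_map 0) ?size_iota // nth_iota.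
rewrite /SAB ew compatAB_split -projA_map -projB_map -ew pa pb.
case: desc_closedP => [cT|ncT] /=; last first.
  rewrite big1 // => V _; case: eqP => // /TV eTV; case: ncT => k l hk e.
  by rewrite !eTV ?(fpar_lt hk e) //; exact: desc_closed_inL.
have iL := inL_cut_of cT.
have mcut : m = cut_mask (cut_of T).
  apply: (@eq_from_nth _ false); first by rewrite size_map size_iota.
  by move=> i; rewrite mn => hi; rewrite (nth_map 0) ?size_iota // nth_iota // iL.
rewrite (big_only1 (cut_of T)) ?admissible_cut_of // => [|V nV aV]; last first.
  case: eqP => // /TV eTV; case/eqP: nV.
  by apply: inL_inj; rewrite ?admissible_cut_of // => i hi; rewrite iL // eTV.
have -> : Roo (cut_of T) = restrict F (fun i => ~~ T i) by apply: restrict_eq => i /iL ->.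
have -> : Lea (cut_of T) = restrict F T by apply: restrict_eq => i /iL.
by rewrite -mcut eqxx mul1n /SA mulnb.
Qed.

Lemma count_cut_mask (V : {set 'I_n}) u v :
  compatA (Roo V) u -> compatA (Lea V) v ->
  count (fun b => ~~ b) (cut_mask V) = size u /\ count id (cut_mask V) = size v.
Proof.
move=> /compatA_size -> /compatA_size ->.
by rewrite /= !size_filter !count_map.
Qed.

Lemma imageAB_cuts u v :
  imageAB F u v = \sum_(V : {set 'I_n} | admissible V) SA (Roo V) u * SA (Lea V) v.
Proof.
pose P m := (projA (shuffle m u v) == u) && (projB (shuffle m u v) == v).
transitivity (\sum_(m <- allmasks (size u + size v) | P m)
  \sum_(V : {set 'I_n} | admissible V) (m == cut_mask V) * (SA (Roo V) u * SA (Lea V) v)).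
  rewrite /imageAB big_seq_cond [RHS]big_seq_cond; apply: eq_bigr => m.
  by rewrite mem_allmasks => /andP [/eqP sm /andP [/eqP pa /eqP pb]]; exact: SAB_shuffle.
rewrite exchange_big; apply: eq_bigr => V _.
rewrite /SA; case cu: (compatA (Roo V) u); last first.
  by rewrite [false * _]mul0n big1 // => m _; rewrite muln0.
case cv: (compatA (Lea V) v); last first.
  by rewrite [_ * false]muln0 big1 // => m _; rewrite muln0.
have [cmu cmv] := count_cut_mask cu cv.
rewrite muln1; apply: sum_delta_seq; first exact: uniq_allmasks.
  by rewrite mem_allmasks -cmu -cmv addnC -(count_predC id).
by rewrite /P; have [-> ->] := projAB_shuffle cmu cmv; rewrite !eqxx.
Qed.

End Forest.

Theorem mainTheorem3 (F G : oforest) (hF : is_forest F) (hG : is_forest G) :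
  (forall w : seq letter, prod_ser (SA F) (SA G) w = SA (fcat F G) w) /\
  (forall u v : seq letter,
     imageAB F u v =
     \sum_(V : {set 'I_(fsize F)} | admissible V) SA (Roo V) u * SA (Lea V) v).
Proof. by split=> [w | u v]; [exact: prod_ser_SA | exact: imageAB_cuts]. Qed.
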